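(* The following are equivalent: (1) $J_\omega[\aleph_2]=\{S\subseteq\aleph_2\mid S\cap S^2_1\text{ is nonstationary}\}$; (2) $J_\omega[\aleph_2]\neq\mathrm{NS}_{\aleph_2}$; (3) $m(\aleph_0,\aleph_0,\aleph_0,\aleph_0)=\aleph_1$; (4) $\mathfrak b=\aleph_1$.
   Context: $S^2_1=\{\alpha<\aleph_2\mid\mathrm{cf}(\alpha)=\aleph_1\}$; $\mathrm{NS}_{\aleph_2}$ is the nonstationary ideal; $\mathfrak b$ is the bounding number. For a set $\Delta$, cardinal $\lambda$, infinite regular $\theta\le|\Delta|$ and $\chi$ equal to $2$ or an infinite cardinal, $m(\Delta,\lambda,\theta,\chi)$ is the least size of a family $\mathcal H$ of functions from $\Delta$ to $[\lambda]^{<\chi}$ such that for every $X\in[\Delta]^\theta$ and every $g:X\to\lambda$ there is $h\in\mathcal H$ with $|\{\xi\in X\mid g(\xi)\in h(\xi)\}|=\theta$. For regular uncountable $\kappa$, $J_\omega[\kappa]$ is the collection of all $S\subseteq\kappa$ for which there exist a club $C\subseteq\kappa$ and functions $f_i:\kappa\to[\kappa]^{<\omega}$ ($i<\kappa$) such that for every $\alpha\in S\cap C$, every regressive $f:\alpha\to\alpha$ and every cofinal $B\subseteq\alpha$, there is $i<\alpha$ with $\sup\{\beta\in B\mid f(\beta)\in f_i(\beta)\}=\alpha$. *)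

From Stdlib Require Import List Arith.
Import ListNotations.

Definition is_wellorder {T : Type} (lt : T -> T -> Prop) : Prop :=
  (forall x, ~ lt x x) /\
  (forall x y z, lt x y -> lt y z -> lt x z) /\
  (forall x y, lt x y \/ x = y \/ lt y x) /\
  well_founded lt.

Definition injects_on {T U : Type} (A : T -> Prop) : Prop :=
  exists f : T -> U, forall x y, A x -> A y -> f x = f y -> x = y.

(* (T1, lt1) is (isomorphic to) omega_1: an uncountable well-order all of whose
   proper initial segments are countable *)
Definition omega1_like {T1 : Type} (lt1 : T1 -> T1 -> Prop) : Prop :=
  is_wellorder lt1 /\
  ~ (@injects_on T1 nat (fun _ => True)) /\
  (forall a, @injects_on T1 nat (fun x => lt1 x a)).

(* (T2, lt2) is (isomorphic to) omega_2, given T1 of size aleph_1: a well-order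
   of size > aleph_1 all of whose proper initial segments have size <= aleph_1 *)
Definition omega2_like (T1 : Type) {T2 : Type} (lt2 : T2 -> T2 -> Prop) : Prop :=
  is_wellorder lt2 /\
  ~ (@injects_on T2 T1 (fun _ => True)) /\
  (forall a, @injects_on T2 T1 (fun x => lt2 x a)).

Section Kappa.
Context {T1 : Type} (lt1 : T1 -> T1 -> Prop) {T2 : Type} (lt2 : T2 -> T2 -> Prop).

Definition le2 (x y : T2) : Prop := lt2 x y \/ x = y.

Definition cof_omega1 (alpha : T2) : Prop :=
  exists h : T1 -> T2,
    (forall x y, lt1 x y -> lt2 (h x) (h y)) /\
    (forall x, lt2 (h x) alpha) /\
    (forall d, lt2 d alpha -> exists x, le2 d (h x)).

Definition S21 (alpha : T2) : Prop := cof_omega1 alpha.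

Definition sup_is (X : T2 -> Prop) (alpha : T2) : Prop :=
  forall d, lt2 d alpha -> exists b, X b /\ lt2 d b /\ lt2 b alpha.

Definition club (C : T2 -> Prop) : Prop :=
  (forall x, exists y, C y /\ lt2 x y) /\
  (forall alpha, (exists d, lt2 d alpha) -> sup_is C alpha -> C alpha).

Definition stationary (S : T2 -> Prop) : Prop :=
  forall C, club C -> exists x, S x /\ C x.

Definition nonstationary (S : T2 -> Prop) : Prop := ~ stationary S.

(* membership in J_omega[aleph_2]; [kappa]^{<omega} is modelled by lists *)
Definition J_omega (S : T2 -> Prop) : Prop :=
  exists (C : T2 -> Prop) (F : T2 -> T2 -> list T2),
    club C /\
    forall alpha, S alpha -> C alpha ->
      forall (f : T2 -> T2),
        (forall b, lt2 b alpha -> (exists g, lt2 g b) -> lt2 (f b) b) ->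
      forall (B : T2 -> Prop),
        (forall b, B b -> lt2 b alpha) ->
        (forall d, lt2 d alpha -> exists b, B b /\ le2 d b) ->
        exists i, lt2 i alpha /\
          sup_is (fun b => B b /\ In (f b) (F i b)) alpha.

End Kappa.

Definition infinite_nat (X : nat -> Prop) : Prop :=
  forall n, exists k, n <= k /\ X k.

(* H witnesses m(aleph0,aleph0,aleph0,aleph0) <= |I| *)
Definition m_family {I : Type} (H : I -> nat -> list nat) : Prop :=
  forall (X : nat -> Prop) (g : nat -> nat), infinite_nat X ->
    exists i, infinite_nat (fun x => X x /\ In (g x) (H i x)).

Definition m_omega_eq_aleph1 (T1 : Type) : Prop :=
  (exists H : T1 -> nat -> list nat, m_family H) /\
  ~ (exists H : nat -> nat -> list nat, m_family H).

Definition le_star (f g : nat -> nat) : Prop :=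
  exists n, forall k, n <= k -> f k <= g k.

Definition unbounded_family {I : Type} (F : I -> nat -> nat) : Prop :=
  ~ exists g : nat -> nat, forall i, le_star (F i) g.

Definition b_eq_aleph1 (T1 : Type) : Prop :=
  (exists F : T1 -> nat -> nat, unbounded_family F) /\
  ~ (exists F : nat -> nat -> nat, unbounded_family F).

From Stdlib Require Import List Arith Lia Classical ClassicalEpsilon FunctionalExtensionality Cantor FinFun.
Import ListNotations.

(* Below omega_2 every limit has cofinality omega or omega_1.  At a point of cofinality
   omega_1 no family F guesses: climbing an omega_1-ladder, the xi-th rung only has to
   avoid the countably many lists F i with i enumerated before xi.  Hence every set in
   J_omega meets S^2_1 in a nonstationary set, while nonstationary sets lie in J_omega
   trivially.  At points of cofinality omega everything hinges on b:
   - if b = aleph_1 there is an m-family H of size aleph_1; along an omega-ladder the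
     values of a regressive f, coded by naturals through a countable ordinal and a
     family of eventually different functions omega_1 -> omega_1, are caught
     infinitely often by one H ze.  So J_omega consists of the S with S ∩ S^2_1
     nonstationary, which is not NS as the points of cofinality omega are stationary;
   - if b > aleph_1, an eventual bound of the aleph_1 functions n |-> (largest code in
     F i (c n)) gives a regressive f escaping every F i, so J_omega = NS.
   Finally b and m(aleph_0, aleph_0, aleph_0, aleph_0) are both uncountable, and an
   unbounded family and an m-family of size aleph_1 produce each other. *)

(* Over an empty type not even the empty set is countable in this sense, hence the
   inhabitants required below. *)
Definition countable {T : Type} (A : T -> Prop) : Prop :=
  exists u : nat -> T, forall x, A x -> exists n, u n = x.

Lemma injects_countable {T} (A : T -> Prop) :
  inhabited T -> @injects_on T nat A -> countable A.
Proof.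
  intros inh [f Hf].
  exists (fun n => epsilon inh (fun x => A x /\ f x = n)).
  intros x Ax. exists (f x).
  destruct (epsilon_spec inh (fun y => A y /\ f y = f x) (ex_intro _ x (conj Ax eq_refl)))
    as [Ay Ef].
  apply Hf; auto.
Qed.

Lemma countable_injects {T} (A : T -> Prop) : countable A -> @injects_on T nat A.
Proof.
  intros [u Hu].
  exists (fun x => epsilon (inhabits 0) (fun n => u n = x)).
  intros x y Ax Ay E.
  pose proof (epsilon_spec (inhabits 0) (fun n => u n = x) (Hu x Ax)) as Ex.
  pose proof (epsilon_spec (inhabits 0) (fun n => u n = y) (Hu y Ay)) as Ey.
  simpl in *. rewrite <- Ex, <- Ey, E. reflexivity.
Qed.

Lemma countable_subset {T} (A B : T -> Prop) :
  countable A -> (forall x, B x -> A x) -> countable B.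
Proof. intros [u Hu] H. exists u. auto. Qed.

Lemma countable_Union_nat {T} (A : nat -> T -> Prop) :
  (forall n, countable (A n)) -> countable (fun x => exists n, A n x).
Proof.
  intros H.
  destruct (choice (fun n (u : nat -> T) => forall x, A n x -> exists m, u m = x) H) as [U HU].
  exists (fun k => U (fst (of_nat k)) (snd (of_nat k))).
  intros x [n Hn]. destruct (HU n x Hn) as [m Hm].
  exists (to_nat (n, m)). rewrite cancel_of_to. exact Hm.
Qed.

Lemma countable_image {T U} (A : T -> Prop) (g : T -> U) :
  countable A -> countable (fun y => exists x, A x /\ y = g x).
Proof.
  intros [u Hu]. exists (fun n => g (u n)).
  intros y [x [Ax ->]]. destruct (Hu x Ax) as [n Hn]. exists n. now rewrite Hn.
Qed.

Lemma countable_Union {T I} (t0 : T) (P : I -> Prop) (A : I -> T -> Prop) :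
  countable P -> (forall i, P i -> countable (A i)) ->
  countable (fun x => exists i, P i /\ A i x).
Proof.
  intros [u Hu] H.
  apply countable_subset with (A := fun x => exists n, P (u n) /\ A (u n) x).
  - apply countable_Union_nat with (A := fun n x => P (u n) /\ A (u n) x). intro n.
    destruct (classic (P (u n))) as [Hp|Hp].
    + apply countable_subset with (A := A (u n)); [apply H; auto | tauto].
    + exists (fun _ => t0). intros x [Hx _]. contradiction.
  - intros x [i [Pi Ai]]. destruct (Hu i Pi) as [n <-]. eauto.
Qed.

Lemma countable_In {T} (t0 : T) (l : list T) : countable (fun y => In y l).
Proof.
  exists (fun n => nth n l t0). intros y Hy.
  destruct (In_nth l y t0 Hy) as [n [_ Hn]]. eauto.
Qed.

Lemma countable_union {T} (A B : T -> Prop) :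
  countable A -> countable B -> countable (fun x => A x \/ B x).
Proof.
  intros HA HB.
  apply countable_subset
    with (A := fun x => exists n, (fun n => match n with 0 => A | _ => B end) n x).
  - apply countable_Union_nat. intros [|n]; auto.
  - intros x [H|H]; [exists 0 | exists 1]; auto.
Qed.

Lemma countable_singleton {T} (a : T) : countable (fun x => x = a).
Proof. exists (fun _ => a). intros x ->. exists 0. reflexivity. Qed.

Lemma countable_range {T} (u : nat -> T) : countable (fun x => exists n, u n = x).
Proof. exists u. intros x [n <-]. eauto. Qed.

Lemma countable_range2 {T} (u : nat -> nat -> T) : countable (fun x => exists n m, u n m = x).
Proof.
  exists (fun k => u (fst (of_nat k)) (snd (of_nat k))).
  intros x [n [m <-]]. exists (to_nat (n, m)). rewrite cancel_of_to. reflexivity.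
Qed.

Lemma wf_rec_spec {T A : Type} (lt : T -> T -> Prop) (wf : well_founded lt) (a0 : A)
  (P : (T -> A) -> T -> A -> Prop)
  (Pext : forall f g x a, (forall y, lt y x -> f y = g y) -> P f x a -> P g x a) :
  exists F : T -> A, forall x, (exists a, P F x a) -> P F x (F x).
Proof.
  pose (ext := fun x (r : forall y, lt y x -> A) (y : T) =>
           match excluded_middle_informative (lt y x) with
           | left H => r y H | right _ => a0 end).
  pose (body := fun x (r : forall y, lt y x -> A) =>
           epsilon (inhabits a0) (fun a => P (ext x r) x a)).
  pose (F := Fix wf (fun _ => A) body).
  exists F. intros x Hex.
  assert (HF : F x = body x (fun y _ => F y)).
  { unfold F. refine (Fix_eq wf (fun _ => A) body _ x). intros x' f g Hfg. unfold body.
    replace (ext x' f) with (ext x' g); [reflexivity|].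
    apply functional_extensionality. intro y. unfold ext.
    destruct (excluded_middle_informative (lt y x')); auto. }
  assert (Hext : forall y, lt y x -> ext x (fun y _ => F y) y = F y).
  { intros y Hy. unfold ext. destruct (excluded_middle_informative (lt y x)); tauto. }
  rewrite HF. unfold body.
  apply Pext with (f := ext x (fun y _ => F y)); [exact Hext|].
  apply epsilon_spec. destruct Hex as [a Ha]. exists a.
  apply Pext with (f := F); auto. intros y Hy. symmetry. apply Hext; auto.
Qed.

Lemma wf_min {T} (lt : T -> T -> Prop) (wf : well_founded lt) (Q : T -> Prop) :
  (exists y, Q y) -> exists y, Q y /\ forall z, Q z -> ~ lt z y.
Proof.
  intros [y Hy]. induction y as [y IH] using (well_founded_ind wf).
  destruct (classic (exists z, Q z /\ lt z y)) as [[z [Qz Hz]]|N].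
  - exact (IH z Hz Qz).
  - exists y. split; auto. intros z Qz Hz. apply N. eauto.
Qed.

Lemma chain_lt {T} (lt : T -> T -> Prop) (tr : forall x y z, lt x y -> lt y z -> lt x z)
  (g : nat -> T) : (forall n, lt (g n) (g (S n))) -> forall n m, n < m -> lt (g n) (g m).
Proof.
  intros Hg n m Hnm. induction m as [|m IH]; [lia|].
  destruct (Nat.eq_dec n m) as [->|Hne]; [apply Hg|].
  apply tr with (g m); [apply IH; lia | apply Hg].
Qed.

Lemma chain_inj {T} (lt : T -> T -> Prop) (irr : forall x, ~ lt x x)
  (tr : forall x y z, lt x y -> lt y z -> lt x z)
  (g : nat -> T) : (forall n, lt (g n) (g (S n))) -> forall n m, g n = g m -> n = m.
Proof.
  intros Hg n m E.
  destruct (lt_eq_lt_dec n m) as [[H|H]|H]; auto; exfalso;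
    pose proof (chain_lt lt tr g Hg _ _ H) as L; rewrite E in L; exact (irr _ L).
Qed.

Lemma regressive_choice {T} (lt : T -> T -> Prop) (D : T -> Prop) (R : T -> T -> Prop) :
  (forall b, D b -> exists y, lt y b /\ R b y) ->
  exists f : T -> T, (forall b, (exists g, lt g b) -> lt (f b) b) /\ (forall b, D b -> R b (f b)).
Proof.
  intros HD.
  destruct (choice (fun b y => ((exists g, lt g b) -> lt y b) /\ (D b -> R b y))) as [f Hf].
  - intro b. destruct (classic (D b)) as [Db|NDb].
    + destruct (HD b Db) as [y [Hy Ry]]. exists y. auto.
    + destruct (classic (exists g, lt g b)) as [[g Hg]|Ng].
      * exists g. tauto.
      * exists b. tauto.
  - exists f. split; intro b; apply Hf.
Qed.

Definition listmax (l : list nat) : nat := fold_right max 0 l.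

Lemma In_le_listmax x l : In x l -> x <= listmax l.
Proof.
  induction l as [|a l IH]; simpl; [tauto|]. intros [->|H]; [lia|]. specialize (IH H). lia.
Qed.

Lemma In_seq_le i x : i <= x -> In i (seq 0 (S x)).
Proof. intros H. apply in_seq. lia. Qed.

Lemma injective_unbounded (q : nat -> nat) : (forall n m, q n = q m -> n = m) ->
  forall N, exists n, N <= q n.
Proof.
  intros Hq N. apply NNPP. intro Hn.
  assert (Hlt : forall n, q n < N) by (intro n; apply Nat.nlt_ge; intro; apply Hn; eauto with arith).
  assert (ND : NoDup (map q (seq 0 (S N)))).
  { apply Injective_map_NoDup; [intros a b; apply Hq | apply seq_NoDup]. }
  assert (Hincl : incl (map q (seq 0 (S N))) (seq 0 N)).
  { intros y Hy. apply in_map_iff in Hy. destruct Hy as [n [<- _]].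
    apply in_seq. specialize (Hlt n). lia. }
  pose proof (NoDup_incl_length ND Hincl) as L. rewrite length_map, !length_seq in L. lia.
Qed.

Lemma not_infinite_nat (P : nat -> Prop) :
  ~ infinite_nat P -> exists n, forall k, n <= k -> ~ P k.
Proof.
  intros N. apply not_all_ex_not in N. destruct N as [n Hn].
  exists n. intros k Hk Pk. apply Hn. eauto.
Qed.

Lemma no_countable_m_family : ~ exists H : nat -> nat -> list nat, m_family H.
Proof.
  intros [H HH].
  pose (g := fun x => S (listmax (map (fun i => listmax (H i x)) (seq 0 (S x))))).
  destruct (HH (fun _ => True) g) as [i Hi]; [intro n; exists n; auto|].
  destruct (Hi i) as [x [Hx [_ Hin]]].
  apply In_le_listmax in Hin.
  assert (L : listmax (H i x) <= listmax (map (fun i => listmax (H i x)) (seq 0 (S x)))).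
  { apply In_le_listmax, (in_map (fun i => listmax (H i x))), In_seq_le; auto. }
  unfold g in Hin. lia.
Qed.

Lemma no_countable_unbounded_family : ~ exists F : nat -> nat -> nat, unbounded_family F.
Proof.
  intros [F HF]. apply HF.
  exists (fun x => listmax (map (fun i => F i x) (seq 0 (S x)))).
  intro i. exists i. intros k Hk.
  apply In_le_listmax, (in_map (fun i => F i k)), In_seq_le; auto.
Qed.

Lemma m_family_unbounded {I} (H : I -> nat -> list nat) :
  m_family H -> unbounded_family (fun i x => listmax (H i x)).
Proof.
  intros HH [g Hg].
  destruct (HH (fun _ => True) (fun x => S (g x))) as [i Hi]; [intro n; exists n; auto|].
  destruct (Hg i) as [N HN]. destruct (Hi N) as [k [Hk [_ Hin]]].
  apply In_le_listmax in Hin. specialize (HN k Hk). lia.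
Qed.

(* [H i x] is the initial segment [0, max_{k <= x} F i k]: if [g] escaped every
   [H i] on an infinite [X], then [n |-> max_{k <= next X n} g k] would bound [F]. *)
Lemma unbounded_m_family {I} (F : I -> nat -> nat) :
  unbounded_family F -> exists H : I -> nat -> list nat, m_family H.
Proof.
  intros HF.
  pose (M := fun i x => listmax (map (F i) (seq 0 (S x)))).
  exists (fun i x => seq 0 (S (M i x))).
  intros X g HX. apply NNPP. intro N. apply HF.
  assert (N' : forall i, exists n, forall k, n <= k -> ~ (X k /\ In (g k) (seq 0 (S (M i k))))).
  { intro i. apply not_infinite_nat. intro K. apply N. eauto. }
  pose (next := fun n => epsilon (inhabits 0) (fun k => n <= k /\ X k)).
  assert (Hnext : forall n, n <= next n /\ X (next n)).
  { intro n. apply (epsilon_spec (inhabits 0) (fun k => n <= k /\ X k)). apply HX. }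
  exists (fun n => listmax (map g (seq 0 (S (next n))))).
  intro i. destruct (N' i) as [Ni HNi]. exists Ni. intros n Hn.
  destruct (Hnext n) as [Hn1 Hn2].
  assert (L1 : M i (next n) < g (next n)).
  { destruct (le_lt_dec (g (next n)) (M i (next n))) as [k|k]; auto. exfalso.
    apply (HNi (next n)); [lia|]. split; auto. apply in_seq. lia. }
  assert (L2 : F i n <= M i (next n)) by (apply In_le_listmax, in_map, In_seq_le; auto).
  assert (L3 : g (next n) <= listmax (map g (seq 0 (S (next n)))))
    by (apply In_le_listmax, in_map, In_seq_le; auto).
  lia.
Qed.

Lemma m_family_along {I} (H : I -> nat -> list nat) (q r : nat -> nat) :
  m_family H -> (forall n m, q n = q m -> n = m) ->
  exists i, forall N, exists n, N <= n /\ In (r n) (H i (q n)).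
Proof.
  intros HH Hq.
  pose (g := fun k => r (epsilon (inhabits 0) (fun n => k = q n))).
  assert (Hgq : forall n, g (q n) = r n).
  { intro n. unfold g. f_equal. apply Hq. symmetry.
    apply (epsilon_spec (inhabits 0) (fun m => q n = q m)). eauto. }
  destruct (HH (fun k => exists n, k = q n) g) as [i Hi].
  { intro N. destruct (injective_unbounded q Hq N) as [n Hn]. eauto. }
  exists i. intro N.
  destruct (Hi (S (listmax (map q (seq 0 N))))) as [k [Hk [[n ->] Hin]]].
  exists n. rewrite Hgq in Hin. split; auto.
  destruct (le_lt_dec N n) as [h|h]; auto. exfalso.
  assert (L : q n <= listmax (map q (seq 0 N))) by (apply In_le_listmax, in_map, in_seq; lia).
  lia.
Qed.

Section Omega1.
Variables (T1 : Type) (lt1 : T1 -> T1 -> Prop).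
Hypothesis H1 : omega1_like lt1.

Lemma lt1_irrefl x : ~ lt1 x x. Proof. apply H1. Qed.
Lemma lt1_trans x y z : lt1 x y -> lt1 y z -> lt1 x z. Proof. apply H1. Qed.
Lemma lt1_total x y : lt1 x y \/ x = y \/ lt1 y x. Proof. apply H1. Qed.
Lemma lt1_wf : well_founded lt1. Proof. apply H1. Qed.

Lemma T1_inhabited : inhabited T1.
Proof.
  apply NNPP. intro N. apply (proj1 (proj2 H1)). exists (fun _ => 0).
  intros x. exfalso. exact (N (inhabits x)).
Qed.

Lemma T1_uncountable : ~ countable (fun _ : T1 => True).
Proof. intro C. apply (proj1 (proj2 H1)). now apply countable_injects. Qed.

Lemma countable_lt1 a : countable (fun x => lt1 x a).
Proof. apply injects_countable; [apply T1_inhabited | apply H1]. Qed.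

Lemma countable_bounded1 (A : T1 -> Prop) : countable A -> exists z, forall x, A x -> lt1 x z.
Proof.
  intros [u Hu]. apply NNPP. intro N. apply T1_uncountable.
  apply countable_subset with (A := fun x => exists n, (fun n x => lt1 x (u n) \/ x = u n) n x).
  - apply countable_Union_nat. intro n. apply countable_union;
      [apply countable_lt1 | apply countable_singleton].
  - intros x _. apply NNPP. intro Hx. apply N. exists x. intros y Ay.
    destruct (Hu y Ay) as [n <-].
    destruct (lt1_total (u n) x) as [H|[H|H]]; auto; exfalso; apply Hx; eauto.
Qed.

Definition succ1 (x : T1) : T1 := epsilon T1_inhabited (fun y => lt1 x y).

Lemma lt1_succ1 x : lt1 x (succ1 x).
Proof.
  unfold succ1. apply epsilon_spec.
  destruct (countable_bounded1 _ (countable_singleton x)) as [z Hz]. eauto.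
Qed.

Lemma lt1_succ1_of_nlt x y : ~ lt1 y x -> lt1 x (succ1 y).
Proof.
  intros H. destruct (lt1_total x y) as [h|[->|h]]; [| apply lt1_succ1 | tauto].
  apply lt1_trans with y; auto. apply lt1_succ1.
Qed.

Section StrictMono.
Variables (T : Type) (lt : T -> T -> Prop) (h : T1 -> T).
Hypotheses (lt_irrefl : forall x, ~ lt x x) (lt_trans : forall x y z, lt x y -> lt y z -> lt x z).
Hypothesis h_mono : forall x y, lt1 x y -> lt (h x) (h y).

Lemma strict_mono1_inj x y : h x = h y -> x = y.
Proof.
  intros E.
  destruct (lt1_total x y) as [k|[k|k]]; auto; apply h_mono in k; rewrite E in k;
    now apply lt_irrefl in k.
Qed.

Lemma strict_mono1_reflect x y : lt (h x) (h y) -> lt1 x y.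
Proof.
  intros L. destruct (lt1_total x y) as [k|[<-|k]]; auto; exfalso.
  - exact (lt_irrefl _ L).
  - exact (lt_irrefl _ (lt_trans _ _ _ L (h_mono _ _ k))).
Qed.
End StrictMono.

Definition enum1 (a : T1) : T1 -> nat :=
  epsilon (inhabits (fun _ : T1 => 0))
    (fun f => forall x y, lt1 x a -> lt1 y a -> f x = f y -> x = y).

Lemma enum1_inj a x y : lt1 x a -> lt1 y a -> enum1 a x = enum1 a y -> x = y.
Proof.
  revert x y. apply (epsilon_spec (inhabits (fun _ : T1 => 0))
    (fun f => forall x y, lt1 x a -> lt1 y a -> f x = f y -> x = y)).
  apply H1.
Qed.

(* [G xi] is an increasing omega-sequence lying above all [G eta], [eta < xi]. *)
Lemma pair1n_exists : exists P : T1 -> nat -> T1,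
  forall a n b m, P a n = P b m -> a = b /\ n = m.
Proof.
  destruct T1_inhabited as [x0].
  destruct (wf_rec_spec lt1 lt1_wf (fun _ => x0)
    (fun G xi g => (forall eta m n, lt1 eta xi -> lt1 (G eta m) (g n)) /\
                   forall n, lt1 (g n) (g (S n)))) as [G HG].
  { intros f g x a Hfg [Ha Hb]. split; auto. intros eta m n Heta. rewrite <- Hfg; auto. }
  assert (HG' : forall xi, (forall eta m n, lt1 eta xi -> lt1 (G eta m) (G xi n)) /\
                           forall n, lt1 (G xi n) (G xi (S n))).
  { intro xi. apply HG.
    destruct (countable_bounded1 (fun y => exists eta, lt1 eta xi /\ exists m, y = G eta m))
      as [b Hb].
    { apply countable_Union; [exact x0 | apply countable_lt1 |].
      intros eta _. exists (G eta). intros y [m ->]. eauto. }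
    exists (fun n => Nat.iter n succ1 b). split.
    - intros eta m n Heta. assert (L : lt1 (G eta m) b) by (apply Hb; eauto).
      destruct n as [|n]; [exact L|]. apply lt1_trans with b; auto.
      apply (chain_lt lt1 lt1_trans (fun n => Nat.iter n succ1 b)) with (n := 0); [|lia].
      intro k. apply lt1_succ1.
    - intro n. apply lt1_succ1. }
  exists G. intros a n b m E.
  destruct (lt1_total a b) as [h|[<-|h]].
  - exfalso. pose proof (proj1 (HG' b) a n m h) as L. rewrite E in L. exact (lt1_irrefl _ L).
  - split; auto. apply (chain_inj lt1 lt1_irrefl lt1_trans (G a)); auto. apply HG'.
  - exfalso. pose proof (proj1 (HG' a) b m n h) as L. rewrite E in L. exact (lt1_irrefl _ L).
Qed.

Definition pair1n : T1 -> nat -> T1 :=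
  epsilon (inhabits (fun (a : T1) (_ : nat) => a))
    (fun P => forall a n b m, P a n = P b m -> a = b /\ n = m).

Lemma pair1n_inj a n b m : pair1n a n = pair1n b m -> a = b /\ n = m.
Proof. revert a n b m. unfold pair1n. apply epsilon_spec, pair1n_exists. Qed.

Definition max1 (a b : T1) : T1 := if excluded_middle_informative (lt1 a b) then b else a.

Lemma max1_ge a b : ~ lt1 (max1 a b) a /\ ~ lt1 (max1 a b) b.
Proof.
  unfold max1. destruct (excluded_middle_informative (lt1 a b)) as [h|h].
  - split; [intro; apply (lt1_irrefl a); eauto using lt1_trans | apply lt1_irrefl].
  - split; [apply lt1_irrefl|]. intro h'.
    destruct (lt1_total a b) as [k|[<-|k]]; [tauto | exact (lt1_irrefl _ h') |].
    apply (lt1_irrefl a). eauto using lt1_trans.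
Qed.

(* Both coordinates lie below [succ1 (max1 a b)], so [enum1] codes them by one natural. *)
Definition pair1 (a b : T1) : T1 :=
  let m := max1 a b in pair1n m (to_nat (enum1 (succ1 m) a, enum1 (succ1 m) b)).

Lemma pair1_inj a b c d : pair1 a b = pair1 c d -> a = c /\ b = d.
Proof.
  unfold pair1. intros E. apply pair1n_inj in E. destruct E as [Em En].
  apply (f_equal of_nat) in En. rewrite !cancel_of_to in En. injection En as Ea Eb.
  destruct (max1_ge a b) as [Ha Hb]. destruct (max1_ge c d) as [Hc Hd].
  rewrite <- Em in Ea, Eb, Hc, Hd.
  split; eapply enum1_inj; eauto; apply lt1_succ1_of_nlt; auto.
Qed.

Definition triple1 (p q r : T1) : T1 := pair1 p (pair1 q r).

Lemma triple1_inj p q r p' q' r' :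
  triple1 p q r = triple1 p' q' r' -> p = p' /\ q = q' /\ r = r'.
Proof.
  unfold triple1. intros E. apply pair1_inj in E. destruct E as [-> E].
  apply pair1_inj in E. tauto.
Qed.

Definition untriple1 (t : T1) : T1 * T1 * T1 :=
  let x0 := epsilon T1_inhabited (fun _ => True) in
  epsilon (inhabits (x0, x0, x0)) (fun p => triple1 (fst (fst p)) (snd (fst p)) (snd p) = t).

Lemma triple1K p q r : untriple1 (triple1 p q r) = (p, q, r).
Proof.
  unfold untriple1.
  match goal with |- epsilon ?i ?P = _ =>
    pose proof (epsilon_spec i P (ex_intro _ (p, q, r) eq_refl)) as E end.
  destruct (epsilon _ _) as [[p' q'] r']. simpl in E.
  apply triple1_inj in E. destruct E as [-> [-> ->]]. reflexivity.
Qed.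

Section Omega2.
Variables (T2 : Type) (lt2 : T2 -> T2 -> Prop).
Hypothesis H2 : omega2_like T1 lt2.

Lemma lt2_irrefl x : ~ lt2 x x. Proof. apply H2. Qed.
Lemma lt2_trans x y z : lt2 x y -> lt2 y z -> lt2 x z. Proof. apply H2. Qed.
Lemma lt2_total x y : lt2 x y \/ x = y \/ lt2 y x. Proof. apply H2. Qed.
Lemma lt2_wf : well_founded lt2. Proof. apply H2. Qed.

Lemma lt2_le2_trans x y z : lt2 x y -> le2 lt2 y z -> lt2 x z.
Proof. intros L [L'|<-]; [exact (lt2_trans _ _ _ L L') | exact L]. Qed.

Lemma le2_lt2_trans x y z : le2 lt2 x y -> lt2 y z -> lt2 x z.
Proof. intros [L|E] L'; [exact (lt2_trans _ _ _ L L') | rewrite E; exact L']. Qed.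

Lemma T2_inhabited : inhabited T2.
Proof.
  apply NNPP. intro N. apply (proj1 (proj2 H2)). destruct T1_inhabited as [x0].
  exists (fun _ => x0). intros x. exfalso. exact (N (inhabits x)).
Qed.

Definition enum2 (a : T2) : T2 -> T1 :=
  epsilon (inhabits (fun _ : T2 => epsilon T1_inhabited (fun _ => True)))
    (fun f => forall x y, lt2 x a -> lt2 y a -> f x = f y -> x = y).

Lemma enum2_inj a x y : lt2 x a -> lt2 y a -> enum2 a x = enum2 a y -> x = y.
Proof.
  revert x y. unfold enum2.
  apply (epsilon_spec _ (fun f => forall x y, lt2 x a -> lt2 y a -> f x = f y -> x = y)).
  apply H2.
Qed.

Lemma countable_enum2_lt a xi : countable (fun d => lt2 d a /\ lt1 (enum2 a d) xi).
Proof.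
  apply injects_countable; [exact T2_inhabited|].
  exists (fun d => enum1 xi (enum2 a d)). intros x y [Hx Hx'] [Hy Hy'] E.
  apply enum1_inj in E; auto. eapply enum2_inj; eauto.
Qed.

(* Otherwise [y |-> (xi, enum2 (v xi) y)], with [xi] a cover index of [y], would
   inject [T2] into [T1]. *)
Lemma T1_not_cofinal2 (v : T1 -> T2) : ~ (forall y, exists xi, le2 lt2 y (v xi)).
Proof.
  intros Hc. apply (proj1 (proj2 H2)).
  pose (xi := fun y => epsilon T1_inhabited (fun xi => le2 lt2 y (v xi))).
  assert (Hxi : forall y, le2 lt2 y (v (xi y))).
  { intro y. apply (epsilon_spec T1_inhabited (fun xi => le2 lt2 y (v xi))), Hc. }
  exists (fun y => if excluded_middle_informative (y = v (xi y)) then pair1n (xi y) 1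
                   else pair1n (pair1 (xi y) (enum2 (v (xi y)) y)) 0).
  intros x y _ _.
  destruct (excluded_middle_informative (x = v (xi x))) as [hx|hx];
  destruct (excluded_middle_informative (y = v (xi y))) as [hy|hy]; intro E;
  apply pair1n_inj in E; destruct E as [Ea En]; try discriminate.
  - rewrite hx, hy, Ea. reflexivity.
  - apply pair1_inj in Ea. destruct Ea as [Ea Eb].
    assert (Lx : lt2 x (v (xi x))) by (destruct (Hxi x); tauto).
    assert (Ly : lt2 y (v (xi y))) by (destruct (Hxi y); tauto).
    rewrite <- Ea in Eb, Ly. eapply enum2_inj; eauto.
Qed.

Lemma T1_family_bounded2 (v : T1 -> T2) : exists b, forall xi, lt2 (v xi) b.
Proof.
  apply NNPP. intro N. apply (T1_not_cofinal2 v). intro y. apply NNPP. intro N2.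
  apply N. exists y. intro xi.
  destruct (lt2_total (v xi) y) as [h|[h|h]]; auto; exfalso; apply N2; exists xi;
    [right | left]; auto.
Qed.

Lemma countable_bounded2 (A : T2 -> Prop) : countable A -> exists b, forall x, A x -> lt2 x b.
Proof.
  intros [u Hu]. destruct T1_inhabited as [x0].
  pose (r := fun xi => epsilon (inhabits 0) (fun n => pair1n x0 n = xi)).
  assert (Er : forall n, r (pair1n x0 n) = n).
  { intro n. apply (pair1n_inj x0 _ x0 n).
    exact (epsilon_spec (inhabits 0) (fun m => pair1n x0 m = pair1n x0 n) (ex_intro _ n eq_refl)). }
  destruct (T1_family_bounded2 (fun xi => u (r xi))) as [b Hb].
  exists b. intros x Ax. destruct (Hu x Ax) as [n <-].
  specialize (Hb (pair1n x0 n)). simpl in Hb. rewrite Er in Hb. exact Hb.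
Qed.

Lemma lt2_unbounded x : exists y, lt2 x y.
Proof.
  destruct (countable_bounded2 _ (countable_singleton x)) as [b Hb]. eauto.
Qed.

Lemma embed12_exists : exists e : T1 -> T2, forall a b, lt1 a b -> lt2 (e a) (e b).
Proof.
  destruct T2_inhabited as [y0].
  destruct (wf_rec_spec lt1 lt1_wf y0 (fun f xi y => forall eta, lt1 eta xi -> lt2 (f eta) y))
    as [e He].
  { intros f g x a Hfg H eta Heta. rewrite <- Hfg; auto. }
  exists e. intros a b Hab. apply He; auto.
  destruct (countable_bounded2 (fun y => exists eta, lt1 eta b /\ y = e eta)) as [c Hc].
  { apply countable_image, countable_lt1. }
  exists c. intros eta H. apply Hc. eauto.
Qed.

Definition embed12 : T1 -> T2 :=
  epsilon (inhabits (fun _ : T1 => epsilon T2_inhabited (fun _ => True)))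
    (fun e => forall a b, lt1 a b -> lt2 (e a) (e b)).

Lemma embed12_mono a b : lt1 a b -> lt2 (embed12 a) (embed12 b).
Proof. revert a b. unfold embed12. apply epsilon_spec, embed12_exists. Qed.

Lemma embed12_inj a b : embed12 a = embed12 b -> a = b.
Proof. exact (strict_mono1_inj T2 lt2 embed12 lt2_irrefl embed12_mono a b). Qed.

Definition unembed12 (i : T2) : T1 := epsilon T1_inhabited (fun xi => embed12 xi = i).

Lemma embed12K xi : unembed12 (embed12 xi) = xi.
Proof.
  apply embed12_inj.
  apply (epsilon_spec T1_inhabited (fun a => embed12 a = embed12 xi)). eauto.
Qed.

(* An upper bound of the copy of [T1] in [T2]: the ordinals from [w1] on are uncountable. *)
Definition w1 : T2 := epsilon T2_inhabited (fun b => forall xi, lt2 (embed12 xi) b).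

Lemma embed12_lt_w1 xi : lt2 (embed12 xi) w1.
Proof.
  revert xi. apply (epsilon_spec T2_inhabited (fun b => forall xi, lt2 (embed12 xi) b)).
  apply T1_family_bounded2.
Qed.

Lemma escape_countable_below (b : T2) (U : T2 -> Prop) :
  ~ lt2 b w1 -> countable U -> exists y, lt2 y b /\ ~ U y.
Proof.
  intros Hb CU. apply NNPP. intro N. apply T1_uncountable.
  apply injects_countable; [exact T1_inhabited|].
  assert (CB : countable (fun y => lt2 y b)).
  { apply countable_subset with (A := U); auto.
    intros y Hy. apply NNPP. intro K. apply N. eauto. }
  destruct (countable_injects _ CB) as [h Hh]. exists (fun xi => h (embed12 xi)).
  assert (L : forall xi, lt2 (embed12 xi) b).
  { intro xi. destruct (lt2_total w1 b) as [k|[<-|k]]; [| apply embed12_lt_w1 | tauto].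
    eapply lt2_trans; [apply embed12_lt_w1 | exact k]. }
  intros x y _ _ E. apply embed12_inj, Hh; auto.
Qed.

Definition limit2 (a : T2) : Prop := (exists d, lt2 d a) /\ sup_is lt2 (fun _ => True) a.

Definition omega_seq (a : T2) (c : nat -> T2) : Prop :=
  (forall n, lt2 (c n) (c (S n))) /\ (forall n, lt2 (c n) a) /\
  sup_is lt2 (fun b => exists n, c n = b) a.

Lemma sup_is_mono (X Y : T2 -> Prop) a :
  (forall x, X x -> Y x) -> sup_is lt2 X a -> sup_is lt2 Y a.
Proof. intros H S d Hd. destruct (S d Hd) as [b [Xb Hb]]. eauto. Qed.

Lemma omega_seq_limit a c : omega_seq a c -> limit2 a.
Proof.
  intros [_ [Hc2 Hc3]]. split; [exists (c 0); auto|].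
  apply sup_is_mono with (X := fun b => exists n, c n = b); auto.
Qed.

Lemma omega_seq_lt a c : omega_seq a c -> forall n m, n < m -> lt2 (c n) (c m).
Proof. intros [Hc _]. exact (chain_lt lt2 lt2_trans c Hc). Qed.

Lemma omega_seq_inj a c : omega_seq a c -> forall n m, c n = c m -> n = m.
Proof. intros [Hc _]. exact (chain_inj lt2 lt2_irrefl lt2_trans c Hc). Qed.

Lemma omega_seq_le a c : omega_seq a c -> forall n m, n <= m -> le2 lt2 (c n) (c m).
Proof.
  intros Hc n m H. destruct (Nat.eq_dec n m) as [->|]; [right; reflexivity|].
  left. apply (omega_seq_lt a c Hc). lia.
Qed.

(* Countably many [h]-indices, one above each [c n], are bounded by some [z]; then
   [h z] would be an upper bound of the [c n] below [a]. *)
Lemma omega_seq_not_cof_omega1 a c : omega_seq a c -> ~ cof_omega1 lt1 lt2 a.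
Proof.
  intros Hc [h [Hh1 [Hh2 Hh3]]].
  destruct (choice (fun n xi => le2 lt2 (c n) (h xi))) as [xi Hxi].
  { intro n. apply Hh3, Hc. }
  destruct (countable_bounded1 (fun z => exists n, xi n = z)) as [z Hz].
  { exists xi. intros x [n <-]. eauto. }
  destruct Hc as [_ [_ Hc3]]. destruct (Hc3 (h z) (Hh2 z)) as [b [[n <-] [L1 L2]]].
  assert (L3 : lt2 (h (xi n)) (h z)) by (apply Hh1, Hz; eauto).
  apply (lt2_irrefl (c n)).
  apply lt2_trans with (h z); [|exact L1].
  destruct (Hxi n) as [L4|E]; [eapply lt2_trans; eauto | rewrite E; exact L3].
Qed.

Lemma limit2_upper_bound a x y :
  limit2 a -> lt2 x a -> lt2 y a -> exists z, lt2 z a /\ lt2 x z /\ lt2 y z.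
Proof.
  intros [_ La] Hx Hy. destruct (lt2_total x y) as [h|[<-|h]].
  - destruct (La y Hy) as [z [_ [Hz1 Hz2]]]. exists z. repeat split; eauto using lt2_trans.
  - destruct (La x Hx) as [z [_ [Hz1 Hz2]]]. eauto.
  - destruct (La x Hx) as [z [_ [Hz1 Hz2]]]. exists z. repeat split; eauto using lt2_trans.
Qed.

Lemma countable_cofinal_omega_seq a (Y : T2 -> Prop) :
  limit2 a -> countable Y -> (forall y, Y y -> lt2 y a) ->
  (forall t, lt2 t a -> exists y, Y y /\ ~ lt2 y t) -> exists c, omega_seq a c.
Proof.
  intros La [u Hu] HY Hcof.
  destruct La as [[d0 Hd0] La'].
  pose (Q := fun n x z => lt2 z a /\ lt2 x z /\ (lt2 (u n) a -> lt2 (u n) z)).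
  pose (step := fun n x => epsilon T2_inhabited (Q n x)).
  assert (Hstep : forall n x, lt2 x a -> Q n x (step n x)).
  { intros n x Hx. apply epsilon_spec. unfold Q.
    destruct (classic (lt2 (u n) a)) as [Hun|Hun].
    - destruct (limit2_upper_bound a x (u n)) as [z Hz]; [split; eauto | auto | auto |].
      exists z. tauto.
    - destruct (La' x Hx) as [z [_ [Hz1 Hz2]]]. exists z. tauto. }
  pose (c := fix c n := match n with 0 => d0 | S n => step n (c n) end).
  assert (Hca : forall n, lt2 (c n) a) by (induction n; [exact Hd0 | apply Hstep; auto]).
  exists c. split; [intro n; apply (Hstep n (c n) (Hca n))|]. split; [exact Hca|].
  intros d Hd. destruct (Hcof d Hd) as [y [Yy Hy]]. destruct (Hu y Yy) as [n <-].
  exists (c (S n)). split; [eauto|]. split; [|apply Hca].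
  pose proof (proj2 (proj2 (Hstep n (c n) (Hca n))) (HY _ Yy)) as L.
  destruct (lt2_total d (u n)) as [h|[E|h]]; [eapply lt2_trans; eauto | rewrite E; exact L | tauto].
Qed.

Lemma countable_bounded_below a (Y : T2 -> Prop) :
  limit2 a -> ~ (exists c, omega_seq a c) -> countable Y -> (forall y, Y y -> lt2 y a) ->
  exists t, lt2 t a /\ forall y, Y y -> lt2 y t.
Proof.
  intros La NE CY HY. apply NNPP. intro Nt.
  apply NE, (countable_cofinal_omega_seq a Y La CY HY).
  intros t Ht. apply NNPP. intro N. apply Nt. exists t. split; auto.
  intros y Yy. apply NNPP. intro K. apply N. eauto.
Qed.

(* Without a cofinal omega-sequence, every countable subset of [a] is bounded below [a],
   so an omega_1-sequence can be built by recursion that eventually passes every [d < a]: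
   [d] is passed at stage [enum2 a d]. *)
Lemma limit2_cof_cases a : limit2 a -> cof_omega1 lt1 lt2 a \/ exists c, omega_seq a c.
Proof.
  intros La. destruct (classic (exists c, omega_seq a c)) as [E|NE]; [right; exact E|left].
  destruct T2_inhabited as [y0].
  pose (P := fun (h : T1 -> T2) xi y => lt2 y a /\
       (forall eta, lt1 eta xi -> lt2 (h eta) a -> lt2 (h eta) y) /\
       (forall d, lt2 d a -> lt1 (enum2 a d) (succ1 xi) -> lt2 d y)).
  destruct (wf_rec_spec lt1 lt1_wf y0 P) as [h Hh].
  { intros f g x y Hfg [A1 [A2 A3]]. split; auto. split; auto.
    intros eta He. rewrite <- Hfg; auto. }
  assert (Hh' : forall xi, P h xi (h xi)).
  { intro xi. apply Hh.
    pose (Y := fun y => (exists eta, lt1 eta xi /\ y = h eta /\ lt2 (h eta) a) \/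
                        (lt2 y a /\ lt1 (enum2 a y) (succ1 xi))).
    assert (CY : countable Y).
    { apply countable_union; [|apply countable_enum2_lt].
      apply countable_subset with (A := fun y => exists eta, lt1 eta xi /\ y = h eta).
      - apply countable_image, countable_lt1.
      - intros y [eta [H3 [H4 _]]]. eauto. }
    assert (HY : forall y, Y y -> lt2 y a) by (intros y [[eta [_ [-> L]]]|[L _]]; auto).
    destruct (countable_bounded_below a Y La NE CY HY) as [t [Ht Hbt]].
    exists t. repeat split; auto.
    - intros eta He Ha. apply Hbt. left. eauto.
    - intros d Hd Hd'. apply Hbt. right. auto. }
  exists h. split; [|split].
  - intros x y Hxy. apply (proj1 (proj2 (Hh' y))); auto. apply Hh'.
  - intro x. apply Hh'.
  - intros d Hd. exists (enum2 a d). left.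
    apply (proj2 (proj2 (Hh' (enum2 a d)))); auto. apply lt1_succ1.
Qed.

Lemma club_omega_seq D : club lt2 D -> forall x, exists a c, D a /\ lt2 x a /\ omega_seq a c.
Proof.
  intros [Dunb Dcl] x.
  pose (above := fun z => epsilon T2_inhabited (fun w => D w /\ lt2 z w)).
  assert (Habove : forall z, D (above z) /\ lt2 z (above z)).
  { intro z. apply epsilon_spec, Dunb. }
  pose (c := fun n => Nat.iter (S n) above x).
  assert (Hc1 : forall n, lt2 (c n) (c (S n))) by (intro n; apply Habove).
  destruct (countable_bounded2 (fun y => exists n, c n = y)) as [b Hb]; [exists c; eauto|].
  destruct (wf_min lt2 lt2_wf (fun y => forall n, lt2 (c n) y)) as [s [Hs1 Hs2]];
    [exists b; eauto|].
  assert (Hsup : sup_is lt2 (fun y => exists n, c n = y) s).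
  { intros t Ht. assert (N : ~ forall n, lt2 (c n) t) by (intro K; exact (Hs2 t K Ht)).
    apply not_all_ex_not in N. destruct N as [n Hn].
    exists (c (S n)). split; [eauto|]. split; [|apply Hs1].
    destruct (lt2_total t (c n)) as [k|[E|k]]; [eapply lt2_trans; eauto | rewrite E; auto | tauto]. }
  exists s, c. repeat split; auto.
  - apply Dcl; [exists (c 0); auto|].
    apply sup_is_mono with (X := fun y => exists n, c n = y); auto.
    intros y [n <-]. apply Habove.
  - eapply lt2_trans; [apply (Habove x) | apply (Hs1 0)].
Qed.

Definition club_limits_above (D : T2 -> Prop) (g : T2) : T2 -> Prop :=
  fun a => D a /\ lt2 g a /\ limit2 a.

Lemma club_limits_above_club D g : club lt2 D -> club lt2 (club_limits_above D g).
Proof.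
  intros HD. split.
  - intro x. destruct (countable_bounded2 (fun y => y = x \/ y = g)) as [b Hb].
    { apply countable_union; apply countable_singleton. }
    destruct (club_omega_seq D HD b) as [a [c [Da [Ha Hc]]]].
    exists a. split; [split; [exact Da | split; [|exact (omega_seq_limit a c Hc)]] |];
      eapply lt2_trans; eauto.
  - intros a [d Hd] Hs. repeat split.
    + apply (proj2 HD); [eauto|]. apply sup_is_mono with (X := club_limits_above D g); auto.
      intros y [Dy _]; auto.
    + destruct (Hs d Hd) as [b [[_ [Hb _]] [_ Hba]]]. eapply lt2_trans; eauto.
    + eauto.
    + apply sup_is_mono with (X := club_limits_above D g); auto.
Qed.

Lemma not_S21_stationary C : club lt2 C -> exists x, ~ S21 lt1 lt2 x /\ C x.
Proof.
  intros HC. destruct T2_inhabited as [y0].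
  destruct (club_omega_seq C HC y0) as [a [c [Ca [_ Hc]]]].
  exists a. split; auto. exact (omega_seq_not_cof_omega1 a c Hc).
Qed.

Lemma omega_seq_ladder a c g (B : T2 -> Prop) :
  omega_seq a c -> lt2 g a -> (forall b, B b -> lt2 b a) ->
  (forall d, lt2 d a -> exists b, B b /\ le2 lt2 d b) ->
  exists l, omega_seq a l /\ (forall n, B (l n)) /\ (forall n, lt2 g (l n)).
Proof.
  intros Hc Hg HB Hcof. pose proof (omega_seq_limit a c Hc) as La.
  destruct (proj2 La g Hg) as [t [_ [Ht1 Ht2]]].
  destruct (Hcof t Ht2) as [b0 [Bb0 Lb0]].
  pose (Q := fun n x b => B b /\ lt2 x b /\ lt2 (c n) b).
  pose (step := fun n x => epsilon T2_inhabited (Q n x)).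
  assert (Hstep : forall n x, lt2 x a -> Q n x (step n x)).
  { intros n x Hx. apply epsilon_spec.
    destruct (limit2_upper_bound a x (c n) La Hx (proj1 (proj2 Hc) n)) as [u [Hu1 [Hu2 Hu3]]].
    destruct (Hcof u Hu1) as [b [Bb Lb]].
    exists b. split; [|split]; eauto using lt2_le2_trans. }
  pose (l := fix l n := match n with 0 => b0 | S n => step n (l n) end).
  assert (HlB : forall n, B (l n)).
  { induction n; [exact Bb0 | apply (Hstep n (l n) (HB _ IHn))]. }
  assert (Hla : forall n, lt2 (l n) a) by (intro n; apply HB, HlB).
  assert (Hl : omega_seq a l).
  { split; [|split]; [intro n; apply (Hstep n (l n) (Hla n)) | exact Hla |].
    intros d Hd. destruct (proj2 (proj2 Hc) d Hd) as [b [[m <-] [L _]]].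
    exists (l (S m)). split; [eauto|]. split; [|apply Hla].
    eapply lt2_trans; [exact L | apply (Hstep m (l m) (Hla m))]. }
  exists l. split; [exact Hl|]. split; [exact HlB|].
  intro n. apply lt2_le2_trans with b0; [eauto using lt2_le2_trans|].
  apply (omega_seq_le a l Hl 0 n). lia.
Qed.

Lemma sup_is_frequent a l (P : T2 -> Prop) :
  omega_seq a l -> (forall N, exists n, N <= n /\ P (l n)) -> sup_is lt2 P a.
Proof.
  intros Hl HP d Hd. destruct (proj2 (proj2 Hl) d Hd) as [b [[m <-] [L _]]].
  destruct (HP m) as [n [Hmn Pn]]. exists (l n). split; [exact Pn|]. split.
  - eapply lt2_le2_trans; [exact L | exact (omega_seq_le a l Hl m n Hmn)].
  - apply Hl.
Qed.

Lemma nat_retract_below_w1 :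
  exists (z : nat -> T2) (idx : T2 -> nat), (forall k, idx (z k) = k) /\ forall k, lt2 (z k) w1.
Proof.
  destruct T1_inhabited as [x0].
  pose (z := fun k => embed12 (pair1n x0 k)).
  exists z, (fun y => epsilon (inhabits 0) (fun k => z k = y)).
  split; [|intro k; apply embed12_lt_w1].
  intro k. pose proof (epsilon_spec (inhabits 0) (fun m => z m = z k) (ex_intro _ k eq_refl)) as E.
  apply embed12_inj, pair1n_inj in E. apply E.
Qed.

Lemma stationary_inhabited S : stationary lt2 S -> exists x, S x.
Proof.
  intros St. destruct (St (fun _ => True)) as [x [Sx _]]; [|eauto].
  split; [intro x; destruct (lt2_unbounded x) as [y Hy]; eauto | auto].
Qed.

Lemma nonstationary_club S : nonstationary lt2 S -> exists C, club lt2 C /\ forall x, C x -> ~ S x.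
Proof.
  intros HS. apply not_all_ex_not in HS. destruct HS as [C HC].
  apply imply_to_and in HC. destruct HC as [HC N].
  exists C. split; auto. intros x Cx Sx. apply N. eauto.
Qed.

(* [J_omega lt2 S] unfolds to: a club [C] and an [F] with [guesses_at F a] for every
   [a] in both [S] and [C]. *)
Definition guesses_at (F : T2 -> T2 -> list T2) (alpha : T2) : Prop :=
  forall f : T2 -> T2, (forall b, lt2 b alpha -> (exists g, lt2 g b) -> lt2 (f b) b) ->
  forall B : T2 -> Prop, (forall b, B b -> lt2 b alpha) ->
    (forall d, lt2 d alpha -> exists b, B b /\ le2 lt2 d b) ->
    exists i, lt2 i alpha /\ sup_is lt2 (fun b => B b /\ In (f b) (F i b)) alpha.

Lemma not_guesses_cof_omega1 F a : lt2 w1 a -> cof_omega1 lt1 lt2 a -> ~ guesses_at F a.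
Proof.
  intros Ha [h [Hh1 [Hh2 Hh3]]] HF. destruct T2_inhabited as [t0].
  pose (B := fun b => exists xi, h xi = b /\ lt2 w1 b).
  destruct (regressive_choice lt2 B (fun b y => forall xi i,
      h xi = b -> lt2 i a -> lt1 (enum2 a i) xi -> ~ In y (F i b))) as [f [Hf HfB]].
  { intros b [xi [<- Hb]].
    destruct (escape_countable_below (h xi)
      (fun y => exists i, (lt2 i a /\ lt1 (enum2 a i) xi) /\ In y (F i (h xi)))) as [y [Hy HyU]].
    - intro K. exact (lt2_irrefl _ (lt2_trans _ _ _ Hb K)).
    - apply countable_Union;
        [exact t0 | apply countable_enum2_lt | intros i _; apply (countable_In t0)].
    - exists y. split; auto. intros xi' i E Hi Hxi Hin.
      apply (strict_mono1_inj T2 lt2 h lt2_irrefl Hh1) in E. subst xi'.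
      apply HyU. eauto. }
  destruct (HF f (fun b _ => Hf b) B) as [i [Hi Hs]].
  - intros b [xi [<- _]]. apply Hh2.
  - intros d Hd. destruct (Hh3 d Hd) as [x1 Hx1]. destruct (Hh3 w1 Ha) as [x2 Hx2].
    destruct (max1_ge x1 x2) as [Hm1 Hm2].
    pose (z := succ1 (max1 x1 x2)).
    exists (h z). split; [exists z; split; [reflexivity|] | left];
      eapply le2_lt2_trans; eauto; apply Hh1, lt1_succ1_of_nlt; assumption.
  - set (xi' := succ1 (enum2 a i)).
    destruct (Hs (h xi') (Hh2 xi')) as [b [[[xi [<- Gb]] Hin] [Lb _]]].
    apply (HfB (h xi) (ex_intro _ xi (conj eq_refl Gb)) xi i eq_refl Hi); [|exact Hin].
    apply lt1_trans with xi'; [apply lt1_succ1|].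
    exact (strict_mono1_reflect T2 lt2 h lt2_irrefl lt2_trans Hh1 _ _ Lb).
Qed.

(* [G (enum2 a i) n] bounds the [idx]-codes in [F i (c n)]; an eventual bound [g] of
   all the [G xi] lets [f (c n) := z (g n + 1)] escape every [F i]. *)
Lemma not_guesses_cof_omega_of_bounded F a :
  (forall G : T1 -> nat -> nat, exists g, forall xi, le_star (G xi) g) ->
  lt2 w1 a -> (exists c, omega_seq a c) -> ~ guesses_at F a.
Proof.
  intros Hb Ha [c0 Hc0] HF.
  destruct (omega_seq_ladder a c0 w1 (fun b => lt2 b a) Hc0 Ha) as [c [Hc [_ Hwc]]];
    [auto | intros d Hd; exists d; split; [exact Hd | right; reflexivity] |].
  destruct nat_retract_below_w1 as [z [idx [Hidx Hz]]].
  pose (iof := fun xi => epsilon T2_inhabited (fun i => lt2 i a /\ enum2 a i = xi)).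
  pose (G := fun xi n => listmax (map idx (F (iof xi) (c n)))).
  destruct (Hb G) as [g Hg].
  destruct (regressive_choice lt2 (fun b => exists n, c n = b)
      (fun b y => forall n, c n = b -> y = z (S (g n)))) as [f [Hf Hfc]].
  { intros b [n <-]. exists (z (S (g n))). split; [eapply lt2_trans; eauto|].
    intros m Em. apply (omega_seq_inj a c Hc) in Em. subst. reflexivity. }
  destruct (HF f (fun b _ => Hf b) (fun b => exists n, c n = b)) as [i [Hi Hs]].
  - intros b [n <-]. apply Hc.
  - intros d Hd. destruct (proj2 (proj2 Hc) d Hd) as [b [Bb [L _]]]. exists b. split; [exact Bb|left; exact L].
  - assert (EG : forall n, G (enum2 a i) n = listmax (map idx (F i (c n)))).
    { intro n. unfold G. do 4 f_equal.
      destruct (epsilon_spec T2_inhabited (fun i' => lt2 i' a /\ enum2 a i' = enum2 a i)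
        (ex_intro _ i (conj Hi eq_refl))) as [K1 K2].
      eapply enum2_inj; eauto. }
    destruct (Hg (enum2 a i)) as [N0 HN0].
    destruct (Hs (c N0) (proj1 (proj2 Hc) N0)) as [b [[[n <-] Hin] [Lb _]]].
    assert (Hn : N0 <= n).
    { destruct (le_lt_dec N0 n) as [k|k]; auto. exfalso.
      exact (lt2_irrefl _ (lt2_trans _ _ _ Lb (omega_seq_lt a c Hc n N0 k))). }
    rewrite (Hfc (c n) (ex_intro _ n eq_refl) n eq_refl) in Hin.
    apply (in_map idx), In_le_listmax in Hin. rewrite Hidx, <- EG in Hin.
    specialize (HN0 n Hn). lia.
Qed.

(* Each [s b] avoids, at coordinate [xi], the countably many values [s g xi] of the
   [g < b] enumerated below [xi]. *)
Lemma eventually_different_exists : exists s : T2 -> T1 -> T1,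
  forall g b xi, lt2 g b -> lt1 (enum2 b g) xi -> s b xi <> s g xi.
Proof.
  destruct (wf_rec_spec lt2 lt2_wf (fun x : T1 => x)
    (fun s b v => forall xi g, lt2 g b -> lt1 (enum2 b g) xi -> v xi <> s g xi)) as [s Hs].
  { intros f g x a Hfg H xi y Hy Hxy. rewrite <- Hfg; auto. }
  exists s. intros g b xi Hg Hxi. apply Hs; auto.
  destruct (choice (fun xi v => forall g, lt2 g b -> lt1 (enum2 b g) xi -> v <> s g xi))
    as [v Hv]; [|eauto].
  intro xi'. apply NNPP. intro N. apply T1_uncountable.
  apply countable_subset with (A := fun y => exists g, (lt2 g b /\ lt1 (enum2 b g) xi') /\ y = s g xi').
  - apply countable_image, countable_enum2_lt.
  - intros y _. apply NNPP. intro K. apply N. exists y. intros g' Hg' Hx' E. apply K. eauto.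
Qed.

Definition coded_below (b : T2) (dl : T1) (k : nat) (y : T2) : Prop :=
  lt2 y b /\ lt1 (enum2 b y) dl /\ enum1 dl (enum2 b y) = k.

Definition pick_below (b : T2) (dl : T1) (k : nat) : list T2 :=
  match excluded_middle_informative (exists y, coded_below b dl k y) with
  | left _ => [epsilon T2_inhabited (coded_below b dl k)]
  | right _ => []
  end.

Lemma In_pick_below b dl y :
  lt2 y b -> lt1 (enum2 b y) dl -> In y (pick_below b dl (enum1 dl (enum2 b y))).
Proof.
  intros Hy Hdl. assert (Cy : coded_below b dl (enum1 dl (enum2 b y)) y) by now split.
  unfold pick_below. destruct (excluded_middle_informative _) as [E|E]; [|exfalso; eauto].
  left. destruct (epsilon_spec T2_inhabited _ E) as [Y1 [Y2 Y3]].
  apply enum1_inj in Y3; auto. eapply enum2_inj; eauto.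
Qed.

(* The index [triple1 i0 dl ze] names a coordinate [i0] of the eventually different
   functions, a countable ordinal [dl] through which ordinals are coded by naturals,
   and a member [H ze] of the m-family. *)
Definition guess (H : T1 -> nat -> list nat) (s : T2 -> T1 -> T1) (i b : T2) : list T2 :=
  let '(i0, dl, ze) := untriple1 (unembed12 i) in
  flat_map (pick_below b dl) (H ze (enum1 dl (s b i0))).

Lemma In_guess H s i0 dl ze b y :
  lt2 y b -> lt1 (enum2 b y) dl -> In (enum1 dl (enum2 b y)) (H ze (enum1 dl (s b i0))) ->
  In y (guess H s (embed12 (triple1 i0 dl ze)) b).
Proof.
  intros Hy Hdl Hin. unfold guess. rewrite embed12K, triple1K.
  apply in_flat_map. eauto using In_pick_below.
Qed.

(* Along an omega-ladder [l], [i0] bounds the enumeration indices of all [l n] in all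
   [l m], so the [s (l n) i0] are pairwise distinct; coding them and the [f (l n)]
   below [dl] by naturals turns [f] into an instance of the m-family property. *)
Lemma guesses_cof_omega (H : T1 -> nat -> list nat) : m_family H ->
  exists F, forall a, lt2 w1 a -> (exists c, omega_seq a c) -> guesses_at F a.
Proof.
  intros HH. destruct eventually_different_exists as [s Hs].
  exists (guess H s). intros a Ha [c Hc] f Hreg B HB Hcof.
  destruct (omega_seq_ladder a c w1 B Hc Ha HB Hcof) as [l [Hl [HlB Hwl]]].
  destruct (countable_bounded1 _ (countable_range2 (fun n m => enum2 (l m) (l n))))
    as [i0 Hi0].
  pose (x := fun n => s (l n) i0).
  assert (xinj : forall n m, x n = x m -> n = m).
  { intros n m E. destruct (lt_eq_lt_dec n m) as [[k|k]|k]; auto; exfalso.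
    - apply (Hs (l n) (l m) i0); [apply (omega_seq_lt a l Hl); auto | apply Hi0; eauto | auto].
    - apply (Hs (l m) (l n) i0); [apply (omega_seq_lt a l Hl); auto | apply Hi0; eauto | auto]. }
  pose (rho := fun n => enum2 (l n) (f (l n))).
  destruct (countable_bounded1 _ (countable_union _ _ (countable_range x) (countable_range rho)))
    as [dl Hdl].
  destruct (m_family_along H (fun n => enum1 dl (x n)) (fun n => enum1 dl (rho n)) HH)
    as [ze Hze].
  { intros n m E. apply xinj. apply enum1_inj in E; auto; apply Hdl; left; eauto. }
  exists (embed12 (triple1 i0 dl ze)). split; [eapply lt2_trans; [apply embed12_lt_w1 | exact Ha]|].
  apply sup_is_frequent with l; auto.
  intro N. destruct (Hze N) as [n [Hn Hin]]. exists n. split; auto. split; auto.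
  apply In_guess; auto.
  - apply Hreg; [apply Hl | exists w1; apply Hwl].
  - apply Hdl. right. exists n. reflexivity.
Qed.

Lemma nonstationary_J_omega S : nonstationary lt2 S -> J_omega lt2 S.
Proof.
  intros HS. destruct (nonstationary_club S HS) as [C [HC N]].
  exists C, (fun _ _ => []). split; auto. intros a Sa Ca. exfalso. exact (N a Ca Sa).
Qed.

Lemma J_omega_S21_nonstationary S :
  J_omega lt2 S -> nonstationary lt2 (fun a => S a /\ S21 lt1 lt2 a).
Proof.
  intros [C [F [HC HJ]]] Hst.
  destruct (Hst _ (club_limits_above_club C w1 HC)) as [a [[Sa Ka] [Ca [Ha _]]]].
  exact (not_guesses_cof_omega1 F a Ha Ka (HJ a Sa Ca)).
Qed.

Lemma J_omega_nonstationary_of_bounded :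
  (forall G : T1 -> nat -> nat, exists g, forall xi, le_star (G xi) g) ->
  forall S, J_omega lt2 S -> nonstationary lt2 S.
Proof.
  intros Hb S [C [F [HC HJ]]] Hst.
  destruct (Hst _ (club_limits_above_club C w1 HC)) as [a [Sa [Ca [Ha La]]]].
  destruct (limit2_cof_cases a La) as [K|K].
  - exact (not_guesses_cof_omega1 F a Ha K (HJ a Sa Ca)).
  - exact (not_guesses_cof_omega_of_bounded F a Hb Ha K (HJ a Sa Ca)).
Qed.

Lemma J_omega_of_S21_nonstationary (H : T1 -> nat -> list nat) : m_family H ->
  forall S, nonstationary lt2 (fun a => S a /\ S21 lt1 lt2 a) -> J_omega lt2 S.
Proof.
  intros HH S HS. destruct (nonstationary_club _ HS) as [D [HD N]].
  destruct (guesses_cof_omega H HH) as [F HF].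
  exists (club_limits_above D w1), F. split; [apply club_limits_above_club; auto|].
  intros a Sa [Da [Ha La]].
  destruct (limit2_cof_cases a La) as [K|K].
  - exfalso. exact (N a Da (conj Sa K)).
  - exact (HF a Ha K).
Qed.

End Omega2.
End Omega1.

Theorem corollary5p3 (T1 : Type) (lt1 : T1 -> T1 -> Prop)
    (T2 : Type) (lt2 : T2 -> T2 -> Prop) :
  omega1_like lt1 -> omega2_like T1 lt2 ->
  let P1 := forall S : T2 -> Prop,
      J_omega lt2 S <-> nonstationary lt2 (fun a => S a /\ S21 lt1 lt2 a) in
  let P2 := ~ (forall S : T2 -> Prop, J_omega lt2 S <-> nonstationary lt2 S) in
  let P3 := m_omega_eq_aleph1 T1 in
  let P4 := b_eq_aleph1 T1 in
  (P1 <-> P2) /\ (P1 <-> P3) /\ (P1 <-> P4).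
Proof.
  intros H1 H2 P1 P2 P3 P4.
  assert (P4_P1 : P4 -> P1).
  { intros [[F HF] _] S. destruct (unbounded_m_family F HF) as [H HH]. split.
    - exact (J_omega_S21_nonstationary _ _ H1 _ _ H2 S).
    - exact (J_omega_of_S21_nonstationary _ _ H1 _ _ H2 H HH S). }
  assert (P1_P2 : P1 -> P2).
  { intros HP1 HNS.
    assert (J : J_omega lt2 (fun a => ~ S21 lt1 lt2 a)).
    { apply HP1. intro St.
      destruct (stationary_inhabited _ _ H1 _ _ H2 _ St) as [a [Na Ka]]. exact (Na Ka). }
    apply (proj1 (HNS _) J). intros C HC. exact (not_S21_stationary _ _ H1 _ _ H2 C HC). }
  assert (P2_P4 : P2 -> P4).
  { intros HP2. split; [|exact no_countable_unbounded_family].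
    apply NNPP. intro N. apply HP2. intro S. split; [|apply nonstationary_J_omega].
    apply (J_omega_nonstationary_of_bounded _ _ H1 _ _ H2).
    intro G. apply NNPP. intro K. apply N. exists G. exact K. }
  assert (P3_P4 : P3 -> P4).
  { intros [[H HH] _]. split; [|exact no_countable_unbounded_family].
    exists (fun i x => listmax (H i x)). exact (m_family_unbounded H HH). }
  assert (P4_P3 : P4 -> P3).
  { intros [[F HF] _]. split; [exact (unbounded_m_family F HF) | exact no_countable_m_family]. }
  tauto.
Qed.
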